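(* Let $P$ be an Eulerian poset of rank $d$. Then $$\sum_{\hat0\le x\le\hat1}B([\hat0,x];u^{-1},v^{-1})(uv)^{\rho(x)}(v-u)^{d-\rho(x)}=\sum_{\hat0\le x\le\hat1}B([x,\hat1];u,v)(uv-1)^{\rho(x)}.$$
   Context: An Eulerian poset is a finite poset with least element $\hat0$, greatest element $\hat1$, all maximal chains of the same length $d$ (the rank), rank function $\rho$, and Möbius function $\mu(x,y)=(-1)^{\rho(y)-\rho(x)}$ for $x\le y$; intervals $[x,y]$ are Eulerian of rank $\rho(y)-\rho(x)$. For Eulerian $Q$ of rank $e$: $G(Q,t)=H(Q,t)=1$ if $e=0$; for $e>0$, $H(Q,t)=\sum_{\hat0<x\le\hat1}(t-1)^{\rho(x)-1}G([x,\hat1],t)$, $G(Q,t)=\tau_{<e/2}((1-t)H(Q,t))$ with $\tau_{<r}(\sum a_it^i)=\sum_{i<r}a_it^i$. $B(Q;u,v)\in\mathbb{Z}[u,v]$ is defined by $B=1$ if $e=0$ and for $e>0$ recursively by $\sum_{\hat0\le x\le\hat1}B([\hat0,x];u,v)u^{e-\rho(x)}G([x,\hat1],u^{-1}v)=G(Q,uv)$. *)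

From HB Require Import structures.
From mathcomp Require Import all_boot all_order all_algebra.
Set Implicit Arguments. Unset Strict Implicit. Unset Printing Implicit Defensive.
Import Order.TTheory GRing.Theory Num.Theory.
Local Open Scope ring_scope.

Section Eulerian.
Variables (disp : Order.disp_t) (T : finTBPOrderType disp) (rho : T -> nat).

(* The fuel #|T| exceeds the length of every chain, so it is never exhausted. *)
Fixpoint mobius_fuel (n : nat) (x y : T) : int :=
  if n is n'.+1 then
    if x == y then 1
    else if (x <= y)%O then - \sum_(z : T | (x <= z)%O && (z < y)%O) mobius_fuel n' x z
    else 0
  else 0.

Definition mobius (x y : T) : int := mobius_fuel #|T| x y.

Definition graded_rank : Prop :=
  [/\ rho \bot%O = 0%N,
      forall x y : T, (x < y)%O -> (rho x < rho y)%N
    & forall x y : T, (x < y)%O -> (forall z : T, ~~ ((x < z)%O && (z < y)%O)) ->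
        rho y = (rho x).+1 ].

Definition eulerian : Prop :=
  graded_rank /\ forall x y : T, (x <= y)%O -> mobius x y = (-1) ^+ (rho y - rho x).

(* tau_{<r}: keep the coefficients of degree i with i < r;
   i < e/2  <->  i < uphalf e *)
Definition trunc_poly (m : nat) (p : {poly int}) : {poly int} := \poly_(i < m) p`_i.

(* G([x,y], t) with fuel n (any n >= rank of [x,y] works); the interval rank is
   rho y - rho x and the rank of z inside [x,y] is rho z - rho x. *)
Fixpoint G_fuel (n : nat) (x y : T) : {poly int} :=
  if n is n'.+1 then
    let e := (rho y - rho x)%N in
    if e == 0%N then 1
    else
      let H := \sum_(z : T | (x < z)%O && (z <= y)%O)
                 ('X - 1) ^+ (rho z - rho x).-1 * G_fuel n' z y in
      trunc_poly (uphalf e) ((1 - 'X) * H)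
  else 1.

Definition Gpoly (x y : T) : {poly int} := G_fuel (rho y - rho x) x y.

Definition Hpoly (x y : T) : {poly int} :=
  if (rho y - rho x == 0)%N then 1
  else \sum_(z : T | (x < z)%O && (z <= y)%O) ('X - 1) ^+ (rho z - rho x).-1 * Gpoly z y.

(* Bivariate polynomials Z[u,v] are {poly {poly int}}: the outer variable is v,
   the inner (coefficient) variable is u. *)
(* g(uv) *)
Definition subst_uv (g : {poly int}) : {poly {poly int}} :=
  \sum_(i < size g) (g`_i *: 'X^i)%:P * 'X^i.
(* u^e g(u^{-1} v), a polynomial since deg g <= e for the G's used below *)
Definition subst_hom (e : nat) (g : {poly int}) : {poly {poly int}} :=
  \sum_(i < size g) (g`_i *: 'X^(e - i))%:P * 'X^i.

(* B([x,y];u,v) from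
   sum_{x<=z<=y} B([x,z];u,v) u^{rk[z,y]} G([z,y],u^{-1}v) = G([x,y],uv),
   solved for the z = y term (G of a rank-0 interval is 1). *)
Fixpoint B_fuel (n : nat) (x y : T) : {poly {poly int}} :=
  if n is n'.+1 then
    if (rho y - rho x == 0)%N then 1
    else subst_uv (Gpoly x y)
         - \sum_(z : T | (x <= z)%O && (z < y)%O)
             B_fuel n' x z * subst_hom (rho y - rho z) (Gpoly z y)
  else 1.

Definition Bpoly (x y : T) : {poly {poly int}} := B_fuel (rho y - rho x) x y.

End Eulerian.

Definition evalUV (F : fieldType) (p : {poly {poly int}}) (u v : F) : F :=
  (map_poly (fun c : {poly int} => (map_poly intr c).[u]) p).[v].

(* The proof rests on the reciprocity of the G-polynomials of an Eulerian poset,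
     t^{rk[x,y]} G([x,y], t^-1) = sum_{x <= z <= y} (t - 1)^{rk[x,z]} G([z,y], t),
   proved by induction on the rank: the induction hypothesis and the Euler relation
   sum_{x < z <= w} (-1)^{rk[x,z]-1} = 1 make H([x,y]) palindromic of degree rk - 1,
   so (1 - t) H is antipalindromic of degree rk, and G is its truncation below rk/2.

   Let g(w,y) = u^{rk[w,y]} G([w,y], v/u), a unitriangular kernel. The recursion
   defining B reads sum_z B([w,z]; u, v) g(z,y) = G([w,y], uv). Pair both sides of
   the proposition, taken over an arbitrary interval [x,y], with g: the right side
   gives sum_w (uv - 1)^{rk[x,w]} G([w,y], uv) at once; the left side gives the same
   after reciprocity at t = v/u, the recursion of B at (u^-1, v^-1) and reciprocity
   at t = uv. Cancelling the unitriangular kernel yields the identity. *)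

From HB Require Import structures.
From mathcomp Require Import all_boot all_order all_algebra.
From mathcomp Require Import zify ring.
Import Order.TTheory GRing.Theory Num.Theory.
Set Implicit Arguments. Unset Strict Implicit. Unset Printing Implicit Defensive.
Local Open Scope ring_scope.

Definition recip (R : nzRingType) (e : nat) (p : {poly R}) : {poly R} :=
  \poly_(i < e.+1) p`_(e - i).

Definition ev (K : fieldType) (t : K) : {rmorphism {poly int} -> K} :=
  GRing.RMorphism.clone _ _ (horner_eval t \o map_poly intr) _.

Lemma evE (K : fieldType) (t : K) p : ev t p = (map_poly intr p).[t].
Proof. by []. Qed.

Lemma ev_X (K : fieldType) (t : K) : ev t 'X = t.
Proof. by rewrite evE map_polyX hornerX. Qed.

Lemma map_recip (R S : nzRingType) (f : R -> S) e (p : {poly R}) : f 0 = 0 ->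
  map_poly f (recip e p) = recip e (map_poly f p).
Proof.
move=> f0; apply/polyP => i; rewrite coef_map_id0 // !coef_poly.
case: ifP => // _; case: ifP => // /negbT; by rewrite -leqNgt => /(nth_default 0) ->.
Qed.

Lemma horner_recip (K : fieldType) e (p : {poly K}) t : t != 0 -> (size p <= e.+1)%N ->
  (recip e p).[t] = t ^+ e * p.[t^-1].
Proof.
move=> t0 sp.
rewrite (horner_coef_wide _ (size_poly _ _)) (horner_coef_wide _ sp) mulr_sumr.
rewrite [LHS](reindex_inj rev_ord_inj) /=; apply: eq_bigr => i _.
rewrite coef_poly; have hi := ltn_ord i.
have -> : (e.+1 - i.+1 < e.+1)%N by lia.
have -> : (e - (e.+1 - i.+1) = i)%N by lia.
by rewrite mulrCA exprVn -exprB ?unitfE.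
Qed.

(* Identities between integer polynomials are checked at nonzero rationals, where
   the reciprocal [t^-1] makes sense. *)
Lemma intr_poly_inj (p q : {poly int}) :
  (forall t : rat, t != 0 -> ev t p = ev t q) -> p = q.
Proof.
move=> epq; apply: (map_inj_poly (@intr_inj rat) (rmorph0 _)).
apply/eqP; rewrite -subr_eq0; apply/eqP.
set r := _ - _.
pose rs := [seq (i.+1)%:R : rat | i <- iota 0 (size r)].
apply: (@roots_geq_poly_eq0 _ _ rs); last by rewrite size_map size_iota.
  apply/allP => _ /mapP[i _ ->].
  by rewrite /root /r hornerD hornerN [_.[_]]epq ?subrr ?pnatr_eq0.
by rewrite map_inj_uniq ?iota_uniq // => i j /eqP; rewrite eqr_nat => /eqP[].
Qed.

Lemma ev_recip (K : fieldType) e (p : {poly int}) (t : K) : t != 0 -> (size p <= e.+1)%N ->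
  ev t (recip e p) = t ^+ e * ev t^-1 p.
Proof.
by move=> t0 sp; rewrite !evE map_recip // horner_recip // (leq_trans (size_poly _ _)).
Qed.

Lemma recip_intr_eq e (p q : {poly int}) : (size p <= e.+1)%N ->
  (forall t : rat, t != 0 -> t ^+ e * ev t^-1 p = ev t q) -> recip e p = q.
Proof. by move=> sp epq; apply: intr_poly_inj => t t0; rewrite ev_recip // epq. Qed.

Lemma size_1subX (R : nzRingType) : size (1 - 'X : {poly R}) = 2%N.
Proof. by rewrite -opprB size_polyN -polyC1 size_XsubC. Qed.

Lemma recip_1subX_mul e (p : {poly int}) : (size p <= e.+1)%N -> recip e p = p ->
  recip e.+1 ((1 - 'X) * p) = - ((1 - 'X) * p).
Proof.
move=> sp rp; apply: recip_intr_eq => [|t t0].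
  apply: leq_trans (size_polyMleq _ _) _.
  by rewrite size_1subX; lia.
have ev_p : t ^+ e * ev t^-1 p = ev t p by rewrite -ev_recip // rp.
rewrite rmorphN !rmorphM !rmorphB !rmorph1 !ev_X -ev_p exprS.
move: (t ^+ e) (ev t^-1 p) => a b.
by field.
Qed.

Lemma recip_trunc e (F : {poly int}) : (size F <= e.+1)%N -> recip e F = - F ->
  recip e (trunc_poly (uphalf e) F) = trunc_poly (uphalf e) F - F.
Proof.
move=> sF rF.
have F_sym i : (i <= e)%N -> F`_(e - i) = - F`_i.
  move=> le_ie; have := congr1 (fun p : {poly int} => p`_i) rF.
  by rewrite coef_poly coefN ltnS le_ie.
have F_big i : (e < i)%N -> F`_i = 0 by move=> lt_ei; apply: nth_default; exact: leq_trans sF lt_ei.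
have e_half : (e <= uphalf e + uphalf e <= e.+1)%N.
  by have := odd_double_half e; rewrite uphalf_half; case: odd => /=; lia.
apply/polyP => i; rewrite coefB !coef_poly.
case: (ltnP e i) => hi.
  have -> : (i < e.+1)%N = false by lia.
  by rewrite F_big //; case: ifP => _; rewrite subrr.
rewrite ltnS hi F_sym //.
case: ifP => h1; case: ifP => h2.
- by exfalso; move/andP: e_half => [? ?]; lia.
- by rewrite sub0r.
- by rewrite subrr.
(* the middle coefficient of an antipalindromic polynomial vanishes *)
have := F_sym i hi; rewrite (_ : (e - i = i)%N); last by move/andP: e_half; lia.
move=> /eqP; rewrite -addr_eq0 -mulr2n mulrn_eq0 /= => /eqP ->.
by rewrite subrr.
Qed.

Section Intervals.
Variables (disp : Order.disp_t) (T : finTBPOrderType disp).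
Implicit Types x y z w : T.

Let card_Ico x y := #|[set a : T | (x <= a < y)%O]|.

Let card_Ico_lt x z y : (x <= z)%O -> (z < y)%O -> (card_Ico x z < card_Ico x y)%N.
Proof.
move=> xz zy; apply: proper_card; apply/properP; split.
  by apply/subsetP => a; rewrite !inE => /andP[-> az]; exact: lt_trans az zy.
by exists z; rewrite !inE ?ltxx ?andbF // xz zy.
Qed.

Let card_Ico_lt_card x y : (card_Ico x y < #|T|)%N.
Proof.
rewrite -cardsT; apply: proper_card; apply/properP; split; first exact: subsetT.
by exists y; rewrite !inE ?ltxx ?andbF.
Qed.

Let mobius_fuelE n m x y : (card_Ico x y < n)%N -> (card_Ico x y < m)%N ->
  mobius_fuel n x y = mobius_fuel m x y.
Proof.
elim: n m x y => [|n IH] [|m] x y hn hm //=.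
case: eqP => // _; case: ifP => // _; congr (- _).
apply: eq_bigr => z /andP[xz zy].
by apply: IH; have := card_Ico_lt xz zy; lia.
Qed.

Lemma mobius_rec x y : (x < y)%O ->
  mobius x y = - \sum_(z | (x <= z < y)%O) mobius x z.
Proof.
move=> xy; rewrite /mobius; move: (card_Ico_lt_card x y).
case: #|T| => [//|N] hN; rewrite [LHS]/= (lt_eqF xy) (ltW xy); congr (- _).
apply: eq_bigr => z /andP[xz zy].
by apply: mobius_fuelE; have := card_Ico_lt xz zy; lia.
Qed.

Lemma sum_mobius_eq0 x y : (x < y)%O -> \sum_(z | (x <= z <= y)%O) mobius x z = 0.
Proof.
move=> xy; rewrite (bigD1 y) /=; last by rewrite (ltW xy) lexx.
rewrite mobius_rec // addrC; apply/eqP; rewrite subr_eq0; apply/eqP.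
by apply: eq_bigl => z; rewrite [(z < y)%O]lt_neqAle -andbA [_ && (z != y)]andbC.
Qed.

Lemma exchange_big_interval (R : nmodType) (P : pred T) y (F : T -> T -> R) :
  (forall z w, P z -> (z <= w)%O -> P w) ->
  \sum_(z | P z && (z <= y)%O) \sum_(w | (z <= w <= y)%O) F z w
  = \sum_(w | P w && (w <= y)%O) \sum_(z | P z && (z <= w)%O) F z w.
Proof.
move=> P_up; rewrite (exchange_big_dep (fun w => P w && (w <= y)%O)) /=; last first.
  by move=> z w /andP[Pz _] /andP[zw ->]; rewrite (P_up z w).
apply: eq_bigr => w /andP[Pw wy]; apply: eq_bigl => z.
case Pz: (P z) => //=; case zw: (z <= w)%O; rewrite ?andbF ?andbT //=.
by rewrite (le_trans zw wy).
Qed.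

End Intervals.

Section Ranked.
Variables (disp : Order.disp_t) (T : finTBPOrderType disp) (rho : T -> nat).
Hypothesis rho_mono : {homo rho : x y / (x < y)%O >-> (x < y)%N}.
Implicit Types x y z w : T.

Lemma le_rho x y : (x <= y)%O -> (rho x <= rho y)%N.
Proof. by rewrite le_eqVlt => /orP[/eqP->//|/rho_mono/ltnW]. Qed.

Lemma le_rho_eq x y : (x <= y)%O -> (rho y <= rho x)%N -> x = y.
Proof. by rewrite le_eqVlt => /orP[/eqP->//|/rho_mono]; lia. Qed.

Let G_fuelE n m x y : (rho y - rho x <= n)%N -> (rho y - rho x <= m)%N ->
  G_fuel rho n x y = G_fuel rho m x y.
Proof.
elim: n m x y => [|n IH] [|m] x y hn hm //=; try by have -> : (rho y - rho x == 0)%N by lia.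
case: eqP => // _; congr trunc_poly; congr (_ * _).
apply: eq_bigr => z /andP[xz _]; congr (_ * _).
by apply: IH; have := rho_mono xz; lia.
Qed.

Lemma GpolyE x y : Gpoly rho x y = if (rho y - rho x == 0)%N then 1
  else trunc_poly (uphalf (rho y - rho x)) ((1 - 'X) * Hpoly rho x y).
Proof.
rewrite /Gpoly /Hpoly; case E: (rho y - rho x)%N => [|e] //=.
rewrite E /=; congr trunc_poly; congr (_ * _).
apply: eq_bigr => z /andP[xz _]; congr (_ * _).
by apply: G_fuelE => //; have := rho_mono xz; lia.
Qed.

Lemma Gpolyxx x : Gpoly rho x x = 1.
Proof. by rewrite GpolyE subnn. Qed.

Lemma HpolyE x y : (x < y)%O -> Hpoly rho x y =
  \sum_(z | (x < z <= y)%O) ('X - 1) ^+ (rho z - rho x).-1 * Gpoly rho z y.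
Proof. by move=> /rho_mono xy; rewrite /Hpoly ifF //; apply/eqP; lia. Qed.

Lemma size_Gpoly x y : (size (Gpoly rho x y) <= (rho y - rho x).+1)%N.
Proof.
rewrite GpolyE; case: eqP => _; first by rewrite size_poly1.
by apply: leq_trans (size_poly _ _) _; rewrite uphalf_half; case: odd => /=; lia.
Qed.

Lemma size_Hpoly x y : (x < y)%O -> (size (Hpoly rho x y) <= rho y - rho x)%N.
Proof.
move=> xy; rewrite HpolyE //.
apply: (big_ind (fun p : {poly int} => size p <= rho y - rho x)%N).
- by rewrite size_poly0.
- by move=> p q sp sq; apply: leq_trans (size_polyD _ _) _; rewrite geq_max sp sq.
move=> z /andP[xz zy]; apply: leq_trans (size_polyMleq _ _) _.
rewrite -polyC1 size_exp_XsubC.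
by have := size_Gpoly z y; have := rho_mono xz; have := le_rho zy; lia.
Qed.

Lemma sum_Gpoly_Hpoly x y : (x < y)%O ->
  \sum_(z | (x <= z <= y)%O) ('X - 1) ^+ (rho z - rho x) * Gpoly rho z y
  = Gpoly rho x y + ('X - 1) * Hpoly rho x y.
Proof.
move=> xy; rewrite (bigD1 x) /=; last by rewrite lexx ltW.
rewrite subnn expr0 mul1r HpolyE // mulr_sumr; congr (_ + _).
apply: eq_big => [z|z /andP[/andP[xz _] zx]].
  by rewrite [(x < z)%O]lt_neqAle eq_sym; case: (x != z); rewrite ?andbT ?andbF.
have /rho_mono : (x < z)%O by rewrite lt_neqAle eq_sym zx.
by case E: (rho z - rho x)%N => [|k]; [lia | rewrite exprS mulrA].
Qed.

Let B_fuelE n m x y : (rho y - rho x <= n)%N -> (rho y - rho x <= m)%N ->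
  B_fuel rho n x y = B_fuel rho m x y.
Proof.
elim: n m x y => [|n IH] [|m] x y hn hm //=; try by have -> : (rho y - rho x == 0)%N by lia.
case: eqP => // _; congr (_ - _).
apply: eq_bigr => z /andP[xz zy]; congr (_ * _).
by apply: IH; have := rho_mono zy; lia.
Qed.

Lemma BpolyE x y : Bpoly rho x y = if (rho y - rho x == 0)%N then 1
  else subst_uv (Gpoly rho x y)
         - \sum_(z | (x <= z < y)%O) Bpoly rho x z * subst_hom (rho y - rho z) (Gpoly rho z y).
Proof.
rewrite /Bpoly; case E: (rho y - rho x)%N => [|e] //=.
rewrite E /=; congr (_ - _).
apply: eq_bigr => z /andP[xz zy]; congr (_ * _).
by apply: B_fuelE => //; have := rho_mono zy; lia.
Qed.

Lemma unitriangular_cancel (R : pzRingType) x (f g : T -> R) (c : T -> T -> R) :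
  (forall y, c y y = 1) ->
  (forall y, (x <= y)%O -> \sum_(w | (x <= w <= y)%O) f w * c w y
                         = \sum_(w | (x <= w <= y)%O) g w * c w y) ->
  forall y, (x <= y)%O -> f y = g y.
Proof.
move=> c_diag fcg y; elim: {y}(rho y).+1 {-2}y (ltnSn (rho y)) => [//|n IH] y lt_yn xy.
have := fcg y xy; rewrite (bigD1 y) ?xy ?lexx // [in RHS](bigD1 y) ?xy ?lexx //.
rewrite c_diag !mulr1 (eq_bigr (fun w => g w * c w y)) => [/addIr //|w /andP[/andP[xw wy] wy']].
have /rho_mono lt_wy : (w < y)%O by rewrite lt_neqAle wy' wy.
by rewrite IH //; lia.
Qed.

End Ranked.

Section Reciprocity.
Variables (disp : Order.disp_t) (T : finTBPOrderType disp) (rho : T -> nat).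
Hypothesis rho_mono : {homo rho : x y / (x < y)%O >-> (x < y)%N}.
Hypothesis mobius_sign : forall x y : T, (x <= y)%O -> mobius x y = (-1) ^+ (rho y - rho x).
Implicit Types x y z w : T.

Lemma sum_Ioc_sign (R : nzRingType) x w : (x < w)%O ->
  \sum_(z | (x < z <= w)%O) ((-1) ^+ (rho z - rho x).-1 : R) = 1.
Proof.
move=> xw.
have sum0 : \sum_(z | (x <= z <= w)%O) ((-1) ^+ (rho z - rho x) : R) = 0.
  have := congr1 (intr : int -> R) (sum_mobius_eq0 xw); rewrite rmorph_sum rmorph0 => sum_mu.
  rewrite -[RHS]sum_mu; apply: eq_bigr => z /andP[xz _].
  by rewrite mobius_sign // rmorphXn rmorphN1.
move: sum0; rewrite (bigD1 x) /=; last by rewrite lexx ltW.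
rewrite subnn expr0 => /eqP; rewrite addrC addr_eq0 => /eqP sum_gt.
rewrite -[RHS]opprK -[in RHS]sum_gt -sumrN; apply: eq_big => [z|z /andP[xz _]].
  by rewrite [(x < z)%O]lt_neqAle (eq_sym z); case: (x != z); rewrite ?andbT ?andbF.
have /rho_mono lt_xz := xz; case E: (rho z - rho x)%N => [|k]; first lia.
by rewrite exprS mulN1r opprK.
Qed.

Lemma sum_Ioc_pow (R : comNzRingType) x w (s : R) : (x < w)%O ->
  \sum_(z | (x < z <= w)%O) (1 - s) ^+ (rho z - rho x).-1 * (s - 1) ^+ (rho w - rho z)
  = (s - 1) ^+ (rho w - rho x).-1.
Proof.
move=> xw; rewrite -[RHS]mul1r -[X in _ = X * _](sum_Ioc_sign R xw) mulr_suml.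
apply: eq_bigr => z /andP[xz zw].
rewrite -[1 - s]opprB (exprNn (s - 1)) -mulrA -exprD.
by have := rho_mono xz; have := le_rho rho_mono zw => ? ?; do 2 f_equal; lia.
Qed.

Definition Gpoly_reciprocity x y : Prop :=
  recip (rho y - rho x) (Gpoly rho x y)
  = \sum_(z | (x <= z <= y)%O) ('X - 1) ^+ (rho z - rho x) * Gpoly rho z y.

Lemma Gpoly_reciprocity_ev (K : fieldType) x y (t : K) : t != 0 -> Gpoly_reciprocity x y ->
  t ^+ (rho y - rho x) * ev t^-1 (Gpoly rho x y)
  = \sum_(z | (x <= z <= y)%O) (t - 1) ^+ (rho z - rho x) * ev t (Gpoly rho z y).
Proof.
move=> t0 rec; rewrite -ev_recip ?size_Gpoly // rec rmorph_sum.
by apply: eq_bigr => z _; rewrite rmorphM rmorphXn rmorphB rmorph1 ev_X.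
Qed.

Lemma Gpoly_reciprocityxx x : Gpoly_reciprocity x x.
Proof.
rewrite /Gpoly_reciprocity (big_pred1 x) => [|z]; last by rewrite -eq_le eq_sym.
rewrite subnn (Gpolyxx rho_mono) expr0 mul1r.
by apply/polyP => i; rewrite coef_poly !coef1; case: i.
Qed.

Lemma Hpoly_recip x y : (x < y)%O ->
  (forall z, (x < z <= y)%O -> Gpoly_reciprocity z y) ->
  recip (rho y - rho x).-1 (Hpoly rho x y) = Hpoly rho x y.
Proof.
move=> xy rec_above; have /rho_mono lt_xy := xy.
apply: recip_intr_eq => [|t t0]; first by rewrite prednK ?size_Hpoly //; lia.
rewrite HpolyE // !rmorph_sum mulr_sumr.
transitivity (\sum_(z | (x < z <= y)%O) \sum_(w | (z <= w <= y)%O)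
   (1 - t) ^+ (rho z - rho x).-1 * ((t - 1) ^+ (rho w - rho z) * ev t (Gpoly rho w y))).
  apply: eq_bigr => z /andP[xz zy].
  (* reciprocity on [z,y], read at t^-1 *)
  rewrite -mulr_sumr -(Gpoly_reciprocity_ev t0 (rec_above z _)) ?xz //.
  rewrite rmorphM rmorphXn rmorphB rmorph1 ev_X.
  have -> : (rho y - rho x).-1 = ((rho z - rho x).-1 + (rho y - rho z))%N.
    by have := rho_mono xz; have := le_rho rho_mono zy; lia.
  have t_scale k : t ^+ k * (t^-1 - 1) ^+ k = (1 - t) ^+ k.
    by rewrite -exprMn mulrBr mulfV // mulr1.
  rewrite exprD -t_scale.
  move: (t ^+ _) (t ^+ _) ((t^-1 - 1) ^+ _) (ev t^-1 _) => a b c d.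
  by ring.
rewrite (exchange_big_interval (P := fun z => (x < z)%O)); last first.
  by move=> z w xz zw; exact: lt_le_trans xz zw.
apply: eq_bigr => w /andP[xw wy].
rewrite rmorphM rmorphXn rmorphB rmorph1 ev_X -(sum_Ioc_pow _ xw) mulr_suml.
by apply: eq_bigr => z _; rewrite mulrA.
Qed.

Lemma Gpoly_reciprocity_lt x y : (x < y)%O ->
  (forall z, (x < z <= y)%O -> Gpoly_reciprocity z y) -> Gpoly_reciprocity x y.
Proof.
move=> xy rec_above; have /rho_mono lt_xy := xy.
have size_h := size_Hpoly rho_mono xy.
have size_F : (size ((1 - 'X) * Hpoly rho x y)%R <= (rho y - rho x).+1)%N.
  apply: leq_trans (size_polyMleq _ _) _.
  by rewrite size_1subX add2n ltnS.
have anti_F : recip (rho y - rho x) ((1 - 'X) * Hpoly rho x y) = - ((1 - 'X) * Hpoly rho x y).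
  have -> : (rho y - rho x = (rho y - rho x).-1.+1)%N by lia.
  by apply: recip_1subX_mul; [lia | exact: Hpoly_recip].
rewrite /Gpoly_reciprocity sum_Gpoly_Hpoly // (GpolyE rho_mono x y) ifF; last by apply/eqP; lia.
by rewrite recip_trunc //; ring.
Qed.

Lemma Gpoly_reciprocity_le x y : (x <= y)%O -> Gpoly_reciprocity x y.
Proof.
move=> xy; have [n le_n] : exists n, (rho y - rho x <= n)%N by exists (rho y - rho x)%N.
elim: n x xy le_n => [|n IH] x xy le_n.
  by rewrite (le_rho_eq rho_mono xy); [exact: Gpoly_reciprocityxx | lia].
have [<-|neq_xy] := eqVneq x y; first exact: Gpoly_reciprocityxx.
have lt_xy : (x < y)%O by rewrite lt_neqAle neq_xy.
apply: Gpoly_reciprocity_lt => // z /andP[xz zy]; apply: IH => //.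
by have := rho_mono xz; lia.
Qed.

Lemma ev_Gpoly_reciprocity (K : fieldType) x y (t : K) : t != 0 -> (x <= y)%O ->
  t ^+ (rho y - rho x) * ev t^-1 (Gpoly rho x y)
  = \sum_(z | (x <= z <= y)%O) (t - 1) ^+ (rho z - rho x) * ev t (Gpoly rho z y).
Proof. by move=> t0 /Gpoly_reciprocity_le; exact: Gpoly_reciprocity_ev. Qed.

Lemma ev_Gpoly_reciprocity_hom (K : fieldType) (a b : K) z y : a != 0 -> b != 0 -> (z <= y)%O ->
  b ^+ (rho y - rho z) * ev (a / b) (Gpoly rho z y)
  = \sum_(w | (z <= w <= y)%O)
      (b - a) ^+ (rho w - rho z) * (a ^+ (rho y - rho w) * ev (b / a) (Gpoly rho w y)).
Proof.
move=> a0 b0 zy; have ba0 : b / a != 0 by rewrite mulf_neq0 ?invr_eq0.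
have := ev_Gpoly_reciprocity ba0 zy; rewrite invf_div => /(congr1 ( *%R (a ^+ (rho y - rho z)))).
rewrite mulrA -exprMn [a * (b / a)]mulrC divfK // => ->; rewrite mulr_sumr.
apply: eq_bigr => w /andP[zw wy].
have -> : (rho y - rho z = (rho w - rho z) + (rho y - rho w))%N.
  by have := le_rho rho_mono zw; have := le_rho rho_mono wy; lia.
have a_scale k : a ^+ k * (b / a - 1) ^+ k = (b - a) ^+ k.
  by rewrite -exprMn mulrBr mulrC divfK // mulr1.
rewrite exprD -a_scale.
move: (a ^+ (rho w - rho z)) (a ^+ (rho y - rho w)) ((b / a - 1) ^+ _) (ev _ _) => p q r s.
by ring.
Qed.

End Reciprocity.

Definition evUV (K : fieldType) (a b : K) : {rmorphism {poly {poly int}} -> K} :=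
  GRing.RMorphism.clone _ _ (horner_eval b \o map_poly (ev a)) _.

Lemma evUVE (K : fieldType) (a b : K) p : evUV a b p = (map_poly (ev a) p).[b].
Proof. by []. Qed.

Lemma ev_coef (K : fieldType) (t : K) (g : {poly int}) :
  ev t g = \sum_(i < size g) (g`_i)%:~R * t ^+ i.
Proof.
rewrite evE (horner_coef_wide _ (size_poly _ _)).
by apply: eq_bigr => i _; rewrite coef_map_id0 ?rmorph0.
Qed.

Lemma ev_scaleXn (K : fieldType) (t : K) (c : int) i : ev t (c *: 'X^i) = c%:~R * t ^+ i.
Proof. by rewrite -mul_polyC rmorphM rmorphXn ev_X evE map_polyC hornerC. Qed.

Lemma evUV_CXn (K : fieldType) (a b : K) (q : {poly int}) i :
  evUV a b (q%:P * 'X^i) = ev a q * b ^+ i.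
Proof. by rewrite rmorphM rmorphXn !evUVE map_polyC map_polyX hornerC hornerX. Qed.

Lemma evUV_subst_uv (K : fieldType) (a b : K) (g : {poly int}) :
  evUV a b (subst_uv g) = ev (a * b) g.
Proof.
rewrite /subst_uv rmorph_sum ev_coef; apply: eq_bigr => i _.
by rewrite evUV_CXn ev_scaleXn exprMn mulrA.
Qed.

Lemma evUV_subst_hom (K : fieldType) (a b : K) k (g : {poly int}) : a != 0 ->
  (size g <= k.+1)%N -> evUV a b (subst_hom k g) = a ^+ k * ev (b / a) g.
Proof.
move=> a0 sg; rewrite /subst_hom rmorph_sum ev_coef mulr_sumr; apply: eq_bigr => i _.
rewrite evUV_CXn ev_scaleXn exprB ?unitfE //; last by have := ltn_ord i; lia.
rewrite exprMn exprVn.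
move: (a ^+ k) (a ^+ i) ((g`_i)%:~R : K) (b ^+ i) => p q r s.
by ring.
Qed.

Section BpolyRecursion.
Variables (disp : Order.disp_t) (T : finTBPOrderType disp) (rho : T -> nat).
Hypothesis rho_mono : {homo rho : x y / (x < y)%O >-> (x < y)%N}.
Implicit Types x y z w : T.

Lemma Bpoly_recursion (K : fieldType) (a b : K) x y : a != 0 -> (x <= y)%O ->
  \sum_(z | (x <= z <= y)%O)
     evUV a b (Bpoly rho x z) * (a ^+ (rho y - rho z) * ev (b / a) (Gpoly rho z y))
  = ev (a * b) (Gpoly rho x y).
Proof.
move=> a0 xy; have [le_yx|lt_xy] := leqP (rho y) (rho x).
  have exy := le_rho_eq rho_mono xy le_yx; subst x.
  rewrite (big_pred1 y) => [|z]; last by rewrite -eq_le eq_sym.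
  by rewrite BpolyE // subnn eqxx expr0 mul1r Gpolyxx // !rmorph1 mulr1.
rewrite (bigD1 y) ?xy ?lexx // subnn expr0 mul1r Gpolyxx // rmorph1 mulr1.
rewrite BpolyE // ifF; last by apply/eqP; lia.
rewrite rmorphB evUV_subst_uv rmorph_sum -[RHS](subrK
  (\sum_(z | (x <= z < y)%O) evUV a b (Bpoly rho x z * subst_hom (rho y - rho z) (Gpoly rho z y)))).
congr (_ + _); apply: eq_big => [z|z /andP[_ zy]].
  by rewrite [(z < y)%O]lt_neqAle -andbA [_ && (z != y)]andbC.
by rewrite rmorphM evUV_subst_hom // size_Gpoly.
Qed.

End BpolyRecursion.

Section Transform.
Variables (disp : Order.disp_t) (T : finTBPOrderType disp) (rho : T -> nat).
Hypothesis rho_mono : {homo rho : x y / (x < y)%O >-> (x < y)%N}.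
Hypothesis mobius_sign : forall x y : T, (x <= y)%O -> mobius x y = (-1) ^+ (rho y - rho x).
Variables (K : fieldType) (u v : K).
Hypotheses (u0 : u != 0) (v0 : v != 0).
Implicit Types x y z w : T.

Let Ghom w y := u ^+ (rho y - rho w) * ev (v / u) (Gpoly rho w y).
Let Binv x z := evUV u^-1 v^-1 (Bpoly rho x z) * (u * v) ^+ (rho z - rho x).

Lemma sum_Binv_Gpoly x y : (x <= y)%O ->
  \sum_(z | (x <= z <= y)%O) Binv x z * (v ^+ (rho y - rho z) * ev (u / v) (Gpoly rho z y))
  = \sum_(w | (x <= w <= y)%O) (u * v - 1) ^+ (rho w - rho x) * ev (u * v) (Gpoly rho w y).
Proof.
move=> xy; have uv0 : u * v != 0 by rewrite mulf_neq0.
rewrite -(ev_Gpoly_reciprocity rho_mono mobius_sign uv0 xy).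
have := Bpoly_recursion rho_mono v^-1 (invr_neq0 u0) xy.
rewrite invfM => <-; rewrite mulr_sumr; apply: eq_bigr => z /andP[xz zy].
rewrite /Binv invrK [v^-1 * u]mulrC [evUV _ _ _ * _]mulrC.
have -> : (rho y - rho x = (rho z - rho x) + (rho y - rho z))%N.
  by have := le_rho rho_mono xz; have := le_rho rho_mono zy; lia.
have uv_scale k : (u * v) ^+ k * u^-1 ^+ k = v ^+ k.
  by rewrite -exprMn mulrAC mulfV // mul1r.
rewrite exprD -uv_scale.
move: ((u * v) ^+ _) ((u * v) ^+ _) (u^-1 ^+ _) (evUV _ _ _) (ev _ _) => a b c d e.
by ring.
Qed.

Lemma sum_Binv_Ghom x y : (x <= y)%O ->
  \sum_(w | (x <= w <= y)%O)
     (\sum_(z | (x <= z <= w)%O) Binv x z * (v - u) ^+ (rho w - rho z)) * Ghom w y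
  = \sum_(w | (x <= w <= y)%O) (u * v - 1) ^+ (rho w - rho x) * ev (u * v) (Gpoly rho w y).
Proof.
move=> xy; rewrite -sum_Binv_Gpoly //.
under [RHS]eq_bigr => z /andP[_ zy].
  rewrite (ev_Gpoly_reciprocity_hom rho_mono mobius_sign u0 v0 zy) mulr_sumr.
over.
rewrite (exchange_big_interval (P := fun z => (x <= z)%O)); last by move=> z w xz; exact: le_trans.
apply: eq_bigr => w _; rewrite mulr_suml; apply: eq_bigr => z _.
by rewrite mulrA.
Qed.

Lemma sum_Bpoly_Ghom x y : (x <= y)%O ->
  \sum_(w | (x <= w <= y)%O)
     (\sum_(z | (x <= z <= w)%O) (u * v - 1) ^+ (rho z - rho x) * evUV u v (Bpoly rho z w))
       * Ghom w y
  = \sum_(w | (x <= w <= y)%O) (u * v - 1) ^+ (rho w - rho x) * ev (u * v) (Gpoly rho w y).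
Proof.
move=> xy; symmetry.
under eq_bigr => w /andP[_ wy].
  rewrite -(Bpoly_recursion rho_mono v u0 wy) mulr_sumr.
over.
rewrite (exchange_big_interval (P := fun z => (x <= z)%O)); last by move=> z w xz; exact: le_trans.
apply: eq_bigr => w _; rewrite mulr_suml; apply: eq_bigr => z _.
by rewrite mulrA.
Qed.

Lemma Bpoly_duality x y : (x <= y)%O ->
  \sum_(z | (x <= z <= y)%O) Binv x z * (v - u) ^+ (rho y - rho z)
  = \sum_(z | (x <= z <= y)%O) evUV u v (Bpoly rho z y) * (u * v - 1) ^+ (rho z - rho x).
Proof.
under [RHS]eq_bigr do rewrite mulrC.
move: y; apply: (unitriangular_cancel rho_mono (c := Ghom)) => [w|w xw].
  by rewrite /Ghom subnn expr0 mul1r Gpolyxx // rmorph1.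
by rewrite sum_Binv_Ghom // sum_Bpoly_Ghom.
Qed.

End Transform.

Unset Implicit Arguments.

Theorem proposition2p11 (disp : Order.disp_t) (T : finTBPOrderType disp)
  (rho : T -> nat) (d : nat) :
  eulerian rho -> rho \top%O = d ->
  forall (F : fieldType) (u v : F), u != 0 -> v != 0 ->
  \sum_(x : T | (\bot <= x <= \top)%O)
     evalUV (Bpoly rho \bot%O x) u^-1 v^-1 * (u * v) ^+ rho x * (v - u) ^+ (d - rho x)
  = \sum_(x : T | (\bot <= x <= \top)%O)
     evalUV (Bpoly rho x \top%O) u v * (u * v - 1) ^+ rho x.
Proof.
move=> [[rho_bot rho_mono _] mobius_sign] <- F u v u0 v0.
have := Bpoly_duality rho_mono mobius_sign u0 v0 (le0x \top%O).
rewrite rho_bot; under eq_bigr do rewrite subn0.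
by under [X in _ = X]eq_bigr do rewrite subn0.
Qed.
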